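(* For any query $Q$, $\mathsf{w}(Q)\le\mathsf{w}(\widehat Q)\le\mathsf{w}(Q)+1$, where $\widehat Q$ is the multivariate extension of $Q$.
   Context: A query is a full conjunctive query $Q = R_1(\mathbf X_1)\wedge\cdots\wedge R_k(\mathbf X_k)$. Multivariate extension: take fresh variables $Z_1,\dots,Z_k$. For a permutation $\sigma$ of $[k]$, the component $\widehat Q_\sigma$ replaces each atom $R_{\sigma_i}(\mathbf X_{\sigma_i})$ by $\widehat R_{\sigma_i}(Z_1,\dots,Z_i,\mathbf X_{\sigma_i})$; $\widehat Q$ is the union of all components. Fractional hypertree width $\mathsf{w}(P)$ of a query $P$: minimum over tree decompositions of $P$ (trees with bags of variables covering every atom schema, the bags containing any variable forming a connected subtree) of the maximum over bags $B$ of the fractional edge cover number of $P$ restricted to $B$ (each atom schema intersected with $B$). For a union of queries, $\mathsf{w}$ is the maximum over the queries. *)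

From mathcomp Require Import all_boot all_order all_algebra all_fingroup.
From mathcomp Require Import classical_sets reals.
Set Implicit Arguments. Unset Strict Implicit. Unset Printing Implicit Defensive.
Import Order.TTheory GRing.Theory Num.Theory.
Local Open Scope ring_scope.

Record atom (Rel V : Type) := Atom { rsym : Rel ; args : seq V }.

Definition query (Rel V : Type) := seq (atom Rel V).

Section Width.
Variables (Rel : Type) (V : finType) (R : realType).

Definition schema (a : atom Rel V) : {set V} := [set x in args a].

Definition qvars (Q : query Rel V) : {set V} := \bigcup_(a <- Q) schema a.

Definition frac_cover (Q : query Rel V) (B : {set V}) : R :=
  inf [set r : R | exists u : 'I_(size Q) -> R,
        (forall i, 0 <= u i) /\
        (forall x, x \in B ->
           1 <= \sum_(i < size Q | x \in schema (tnth (in_tuple Q) i) :&: B) u i) /\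
        r = \sum_(i < size Q) u i].

(* Trees on nodes 'I_n.+1 given by a parent function: node 0 is the root and
   every other node i has parent par i < i.  Every finite tree arises so. *)
Definition parent_ok n (par : 'I_n.+1 -> 'I_n.+1) :=
  forall i : 'I_n.+1, i != ord0 -> (par i < i)%N.

Definition tree_adj n (par : 'I_n.+1 -> 'I_n.+1) : rel 'I_n.+1 :=
  fun i j => ((i != ord0) && (par i == j)) || ((j != ord0) && (par j == i)).

Definition tree_connected n (par : 'I_n.+1 -> 'I_n.+1) (S : {set 'I_n.+1}) :=
  forall t1 t2, t1 \in S -> t2 \in S ->
    connect (fun a b => [&& a \in S, b \in S & tree_adj par a b]) t1 t2.

Definition tree_decomposition (Q : query Rel V) n
    (par : 'I_n.+1 -> 'I_n.+1) (bag : 'I_n.+1 -> {set V}) :=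
  [/\ parent_ok par,
      (forall t, bag t \subset qvars Q),
      (forall i : 'I_(size Q), exists t, schema (tnth (in_tuple Q) i) \subset bag t) &
      (forall x, tree_connected par [set t | x \in bag t])].

Definition fhw (Q : query Rel V) : R :=
  inf [set r : R | exists n (par : 'I_n.+1 -> 'I_n.+1) (bag : 'I_n.+1 -> {set V}),
        tree_decomposition Q par bag /\
        r = \big[Num.max/0]_(t : 'I_n.+1) frac_cover Q (bag t)].

End Width.

(* Multivariate extension. Fresh variables Z_1..Z_k are encoded as inr j,
   j : 'I_k (Z_{j+1}); original variables as inl x. *)
Definition ext_atom (Rel V : Type) k (i : 'I_k) (a : atom Rel V)
  : atom Rel (V + 'I_k) :=
  Atom (rsym a) ([seq inr j | j : 'I_k <- enum 'I_k & (j <= i)%N] ++ map inl (args a)).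

(* component hat Q_sigma: the i-th atom (0-based) is hat R_{sigma i}
   (Z_1, ..., Z_{i+1}, X_{sigma i}). *)
Definition ext_component (Rel V : Type) (Q : query Rel V) (s : 'S_(size Q))
  : query Rel (V + 'I_(size Q)) :=
  [seq ext_atom i (tnth (in_tuple Q) (s i)) | i <- enum 'I_(size Q)].
Arguments ext_component {Rel V} Q s.

(* The atoms of a component hat Q_sigma are those of Q, permuted by sigma and
   enlarged by fresh variables.  Forgetting the fresh variables therefore
   turns a tree decomposition of hat Q_sigma into one of Q, and a fractional
   cover of a bag of hat Q_sigma into a cover of the forgotten bag of the same
   weight.  Conversely, adding all of Z_1, ..., Z_k to every bag of a
   decomposition of Q gives one of hat Q_sigma (each Z_j lies in every bag),
   and a cover of a bag of Q extends to the enlarged bag by putting weight 1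
   on the last atom of hat Q_sigma, which contains all of Z_1, ..., Z_k. *)

From mathcomp Require Import all_boot all_order all_algebra all_fingroup.
From mathcomp Require Import classical_sets reals zify.
Import Order.TTheory GRing.Theory Num.Theory.
Local Open Scope ring_scope.
Set Implicit Arguments. Unset Strict Implicit. Unset Printing Implicit Defensive.

Lemma inf_le_infD (R : realType) (A B : set R) (c : R) :
  nonempty A -> has_lbound B -> (forall a, A a -> exists2 b, B b & b <= a + c) ->
  inf B <= inf A + c.
Proof.
move=> A0 lbB AB; rewrite -lerBlDr; apply: lb_le_inf A0 _ => a /AB [b Bb le_ba].
by rewrite lerBlDr (le_trans _ le_ba) // ge_inf.
Qed.

Lemma sum_indicator_le1 (R : numDomainType) n m :
  \sum_(i < n) ((i : nat) == m)%:R <= 1 :> R.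
Proof.
rewrite -natr_sum lern1 -big_mkcond /= sum1_card.
by apply/card_le1_eqP => i j /eqP im /eqP jm; apply: val_inj; rewrite /= im jm.
Qed.

Lemma tree_connected_full n (par : 'I_n.+1 -> 'I_n.+1) (S : {set 'I_n.+1}) :
  parent_ok par -> (forall t, t \in S) -> tree_connected par S.
Proof.
move=> par_lt S_full.
set e := fun a b => [&& a \in S, b \in S & tree_adj par a b].
have e_sym : symmetric e by move=> a b; rewrite /e /tree_adj !S_full /= orbC.
have to_root m (t : 'I_n.+1) : (t < m)%N -> connect e t ord0.
  elim: m t => [// | m IHm] t lt_tm.
  have [-> | t_neq0] := eqVneq t ord0; first exact: connect0.
  apply: connect_trans (IHm (par t) _); last exact: leq_trans (par_lt t t_neq0) _.
  by apply: connect1; rewrite /e /tree_adj !S_full t_neq0 eqxx.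
move=> t1 t2 _ _; apply: connect_trans (to_root _ t1 (ltnSn _)) _.
by rewrite (sym_connect_sym e_sym); exact: to_root (ltnSn _).
Qed.

Section Width.
Variables (R : realType) (Rel : Type) (V : finType).
Implicit Types (Q : query Rel V) (B : {set V}).

Lemma qvarsP Q x :
  reflect (exists i, x \in schema (tnth (in_tuple Q) i)) (x \in qvars Q).
Proof.
rewrite /qvars big_tnth.
by apply: (iffP bigcupP) => [[i _ xi] | [i xi]]; exists i.
Qed.

Definition cover_weights Q B : set R :=
  [set r : R | exists u : 'I_(size Q) -> R,
        (forall i, 0 <= u i) /\
        (forall x, x \in B ->
           1 <= \sum_(i < size Q | x \in schema (tnth (in_tuple Q) i) :&: B) u i) /\
        r = \sum_(i < size Q) u i].

Lemma cover_weights_nonempty Q B :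
  B \subset qvars Q -> nonempty (cover_weights Q B).
Proof.
move=> sBQ; exists (\sum_(i < size Q) 1), (fun=> 1); split=> //; split=> // x xB.
have /qvarsP [i xi] := fintype.subsetP sBQ x xB.
by rewrite (bigD1 i) /= ?lerDl ?sumr_ge0 // inE xi xB.
Qed.

Lemma cover_weights_ge0 Q B : lbound (cover_weights Q B) 0.
Proof. by move=> _ [u [u_ge0 [_ ->]]]; exact: sumr_ge0. Qed.

Definition decomposition_widths Q : set R :=
  [set r : R | exists n (par : 'I_n.+1 -> 'I_n.+1) (bag : 'I_n.+1 -> {set V}),
        tree_decomposition Q par bag /\
        r = \big[Num.max/0]_(t : 'I_n.+1) frac_cover R Q (bag t)].

Lemma tree_decomposition_single Q :
  tree_decomposition Q (fun t : 'I_1 => t) (fun=> qvars Q).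
Proof.
split=> [i | // | i | x t1 t2 _ _].
- by rewrite (ord1 i) eqxx.
- by exists ord0; apply/fintype.subsetP => x xi; apply/qvarsP; exists i.
- by rewrite (ord1 t1) (ord1 t2) connect0.
Qed.

Lemma decomposition_widths_nonempty Q : nonempty (decomposition_widths Q).
Proof.
eexists; exists 0%N, id, (fun=> qvars Q).
by split; first exact: tree_decomposition_single.
Qed.

Lemma decomposition_widths_ge0 Q : lbound (decomposition_widths Q) 0.
Proof. by move=> _ [n [par [bag [_ ->]]]]; exact: bigmax_ge_id. Qed.

Lemma fhw_ge0 Q : 0 <= fhw R Q.
Proof.
apply: lb_le_inf; first exact: decomposition_widths_nonempty.
exact: decomposition_widths_ge0.
Qed.

End Width.

Section Extension.
Variables (Rel : Type) (V : finType).

Lemma inl_in_schema_ext k (i : 'I_k) (a : atom Rel V) x :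
  (inl x \in schema (ext_atom i a)) = (x \in schema a).
Proof.
have inl_inj : injective (@inl V 'I_k) by move=> ? ? [].
by rewrite !inE mem_cat (mem_map inl_inj) orb_idl // => /mapP [].
Qed.

Lemma inr_in_schema_ext k (i : 'I_k) (a : atom Rel V) z :
  (inr z \in schema (ext_atom i a)) = (z <= i)%N.
Proof.
have inr_inj : injective (@inr V 'I_k) by move=> ? ? [].
rewrite !inE mem_cat (mem_map inr_inj) mem_filter mem_enum andbT.
by rewrite orb_idr // => /mapP [].
Qed.

Variables (Q : query Rel V) (s : 'S_(size Q)).
Local Notation Qh := (ext_component Q s).

Lemma size_ext_component : size Qh = size Q.
Proof. by rewrite size_map size_enum_ord. Qed.

Definition ext_pos (i : 'I_(size Qh)) : 'I_(size Q) :=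
  cast_ord size_ext_component i.

Definition orig_atom (i : 'I_(size Qh)) : 'I_(size Q) := s (ext_pos i).

Lemma tnth_ext_component i :
  tnth (in_tuple Qh) i = ext_atom (ext_pos i) (tnth (in_tuple Q) (orig_atom i)).
Proof.
rewrite (tnth_nth (ext_atom (ext_pos i) (tnth (in_tuple Q) (orig_atom i)))) /=.
rewrite -[nat_of_ord i]/(nat_of_ord (ext_pos i)).
by rewrite (nth_map (ext_pos i)) ?size_enum_ord // nth_ord_enum.
Qed.

Definition ext_atom_of (j : 'I_(size Q)) : 'I_(size Qh) :=
  cast_ord (esym size_ext_component) ((s^-1)%g j).

Lemma ext_atom_ofK : cancel ext_atom_of orig_atom.
Proof. by move=> j; rewrite /orig_atom /ext_pos cast_ordKV permKV. Qed.

Lemma orig_atomK : cancel orig_atom ext_atom_of.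
Proof. by move=> i; rewrite /ext_atom_of permK cast_ordK. Qed.

Lemma orig_atom_bij : bijective orig_atom.
Proof. exact: Bijective orig_atomK ext_atom_ofK. Qed.

Lemma ext_atom_of_bij : bijective ext_atom_of.
Proof. exact: Bijective ext_atom_ofK orig_atomK. Qed.

Lemma inl_in_ext_component i x :
  (inl x \in schema (tnth (in_tuple Qh) i)) =
  (x \in schema (tnth (in_tuple Q) (orig_atom i))).
Proof. by rewrite tnth_ext_component inl_in_schema_ext. Qed.

Lemma inr_in_ext_component i z :
  (inr z \in schema (tnth (in_tuple Qh) i)) = (z <= i)%N.
Proof. by rewrite tnth_ext_component inr_in_schema_ext. Qed.

Definition forget_fresh (Bh : {set V + 'I_(size Q)}) : {set V} :=
  [set x | inl x \in Bh].

Definition add_fresh (B : {set V}) : {set V + 'I_(size Q)} :=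
  [set v | if v is inl x then x \in B else true].

Variable R : realType.

Lemma frac_cover_forget_fresh (Bh : {set V + 'I_(size Q)}) :
  Bh \subset qvars Qh -> frac_cover R Q (forget_fresh Bh) <= frac_cover R Qh Bh.
Proof.
move=> sBh; rewrite -[leRHS]addr0.
apply: inf_le_infD (cover_weights_nonempty R sBh) _ _.
  by exists 0; exact: cover_weights_ge0.
move=> _ [u [u_ge0 [u_cov ->]]]; exists (\sum_j u (ext_atom_of j)).
  exists (fun j => u (ext_atom_of j)); split=> //; split=> // x; rewrite inE => xB.
  apply: le_trans (u_cov _ xB) _; rewrite (reindex ext_atom_of) /=; last first.
    exact: onW_bij ext_atom_of_bij.
  rewrite le_eqVlt; apply/predU1l/eq_bigl => j.
  by rewrite !finset.in_setI inl_in_ext_component ext_atom_ofK !inE.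
by rewrite addr0 (reindex ext_atom_of) //; exact: onW_bij ext_atom_of_bij.
Qed.

Lemma frac_cover_add_fresh (B : {set V}) : B \subset qvars Q ->
  frac_cover R Qh (add_fresh B) <= frac_cover R Q B + 1.
Proof.
move=> sBQ; apply: inf_le_infD (cover_weights_nonempty R sBQ) _ _.
  by exists 0; exact: cover_weights_ge0.
move=> _ [u [u_ge0 [u_cov ->]]].
pose uh (i : 'I_(size Qh)) := u (orig_atom i) + ((i : nat) == (size Q).-1)%:R.
have uh_ge0 i : 0 <= uh i by rewrite addr_ge0.
exists (\sum_i uh i); last first.
  rewrite big_split lerD ?sum_indicator_le1 // (reindex orig_atom) //.
  exact: onW_bij orig_atom_bij.
exists uh; split=> //; split=> // -[x | z] v_in; last first.
  have lt_zQ := ltn_ord z.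
  have lt_last : ((size Q).-1 < size Qh)%N by rewrite size_ext_component; lia.
  pose last_atom := Ordinal lt_last.
  have z_last : inr z \in schema (tnth (in_tuple Qh) last_atom) :&: add_fresh B.
    by rewrite finset.in_setI inr_in_ext_component inE andbT /=; lia.
  by rewrite (bigD1 last_atom) //= ler_wpDr ?sumr_ge0 // /uh eqxx lerDr.
rewrite inE in v_in; apply: le_trans (u_cov _ v_in) _.
rewrite (reindex orig_atom) /=; last exact: onW_bij orig_atom_bij.
rewrite big_mkcond [leRHS]big_mkcond /=; apply: ler_sum => i _.
rewrite !finset.in_setI inl_in_ext_component !inE v_in.
by case: ifP => // _; rewrite lerDl.
Qed.

Lemma tree_decomposition_forget_fresh n (par : 'I_n.+1 -> 'I_n.+1) bag :
  tree_decomposition Qh par bag ->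
  tree_decomposition Q par (fun t => forget_fresh (bag t)).
Proof.
case=> par_lt bag_sub atom_in conn; split=> // [t | j | x].
- apply/fintype.subsetP => x; rewrite inE => /(fintype.subsetP (bag_sub t)).
  case/qvarsP => i xi; apply/qvarsP.
  by exists (orig_atom i); rewrite -inl_in_ext_component.
- have [t sub_t] := atom_in (ext_atom_of j); exists t.
  apply/fintype.subsetP => x xj; rewrite inE (fintype.subsetP sub_t) //.
  by rewrite inl_in_ext_component ext_atom_ofK.
- have -> : [set t | x \in forget_fresh (bag t)] = [set t | inl x \in bag t].
    by apply/setP => t; rewrite !inE.
  exact: conn.
Qed.

Lemma tree_decomposition_add_fresh n (par : 'I_n.+1 -> 'I_n.+1) bag :
  tree_decomposition Q par bag ->
  tree_decomposition Qh par (fun t => add_fresh (bag t)).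
Proof.
case=> par_lt bag_sub atom_in conn; split=> // [t | i | [x | z]].
- apply/fintype.subsetP => -[x | z]; rewrite inE => v_in; apply/qvarsP.
    have /qvarsP [j xj] := fintype.subsetP (bag_sub t) _ v_in.
    by exists (ext_atom_of j); rewrite inl_in_ext_component ext_atom_ofK.
  exists (cast_ord (esym size_ext_component) z).
  by rewrite inr_in_ext_component.
- have [t sub_t] := atom_in (orig_atom i); exists t.
  apply/fintype.subsetP => -[x | z] v_in; rewrite inE //.
  by apply: (fintype.subsetP sub_t); rewrite -inl_in_ext_component.
- have -> : [set t | inl x \in add_fresh (bag t)] = [set t | x \in bag t].
    by apply/setP => t; rewrite !inE.
  exact: conn.
- by apply: tree_connected_full => // t; rewrite !inE.
Qed.

Lemma fhw_le_ext_component : fhw R Q <= fhw R Qh.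
Proof.
rewrite -[leRHS]addr0.
apply: inf_le_infD (decomposition_widths_nonempty R Qh) _ _.
  by exists 0; exact: decomposition_widths_ge0.
move=> _ [n [par [bag [td ->]]]].
exists (\big[Num.max/0]_t frac_cover R Q (forget_fresh (bag t))).
  exists n, par, (fun t => forget_fresh (bag t)); split=> //.
  exact: tree_decomposition_forget_fresh.
have [_ bag_sub _ _] := td.
by rewrite addr0; apply: le_bigmax2 => t _; exact: frac_cover_forget_fresh.
Qed.

Lemma fhw_ext_component_le_add1 : fhw R Qh <= fhw R Q + 1.
Proof.
apply: inf_le_infD (decomposition_widths_nonempty R Q) _ _.
  by exists 0; exact: decomposition_widths_ge0.
move=> _ [n [par [bag [td ->]]]].
exists (\big[Num.max/0]_t frac_cover R Qh (add_fresh (bag t))).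
  exists n, par, (fun t => add_fresh (bag t)); split=> //.
  exact: tree_decomposition_add_fresh.
have [_ bag_sub _ _] := td.
apply: bigmax_le => [|t _]; first by rewrite addr_ge0 ?bigmax_ge_id.
apply: le_trans (frac_cover_add_fresh (bag_sub t)) _.
by rewrite lerD2r (le_bigmax _ (fun t => frac_cover R Q (bag t))).
Qed.

End Extension.

Theorem mainTheorem10 (R : realType) (Rel : Type) (V : finType) (Q : query Rel V) :
  let w_hat : R := \big[Num.max/0]_(s : 'S_(size Q)) fhw R (ext_component Q s) in
  fhw R Q <= w_hat /\ w_hat <= fhw R Q + 1.
Proof.
split.
- exact: le_trans (fhw_le_ext_component 1%g R) (le_bigmax _ _ _).
- apply: bigmax_le => [|s _]; last exact: fhw_ext_component_le_add1.
  by rewrite addr_ge0 ?fhw_ge0.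
Qed.
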